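(* Let $\nu\in\mathcal P_{2,0}(\mathbb R^d)$ and $1\le m\le d$. Let $V_m$ be the set of $m$-dimensional linear subspaces of $\mathbb R^d$ and $\mathcal D_m=\{\mu\in\mathcal P_{2,0}(\mathbb R^d):\mu(E)=1\text{ for some }E\in V_m\}$. Then every maximizer of $\operatorname{Var}(\mu)$ over $\{\mu\in\mathcal D_m:\mu\preceq_K\nu\}$ is of the form $(p_E)_\#\nu$ for some $E\in V_m$, where $p_E$ is the orthogonal projection onto $E$.
   Context: $\mathcal P_{2,0}(\mathbb R^d)$: Borel probability measures with finite second moment and zero mean. $\operatorname{Var}(\mu)=\int|x-\int z\,d\mu|^2d\mu$. Kantorovich dominance: $\mu\preceq_K\nu$ iff there is a coupling $\pi$ of $\mu,\nu$ with $\int\langle x-b_\nu,y-x\rangle\,d\pi=0$, $b_\nu=\int y\,d\nu$. *)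

From HB Require Import structures.
From mathcomp Require Import all_boot all_order all_algebra.
From mathcomp Require Import all_classical all_reals all_analysis.
Set Implicit Arguments. Unset Strict Implicit. Unset Printing Implicit Defensive.
Import Order.TTheory GRing.Theory Num.Theory.
Import numFieldNormedType.Exports.
Local Open Scope classical_set_scope.
Local Open Scope ring_scope.

Definition Rd (R : realType) (d : nat) :=
  g_sigma_algebraType (open : set (set 'rV[R]_d)).

Definition dotv {R : realType} {d : nat} (x y : 'rV[R]_d) : R :=
  \sum_(i < d) x ord0 i * y ord0 i.
Definition sqnorm {R : realType} {d : nat} (x : 'rV[R]_d) : R := dotv x x.

Definition barycenter {R : realType} {d : nat} (mu : probability (Rd R d) R)
  : 'rV[R]_d :=
  \row_(i < d) fine (\int[mu]_(x in [set: Rd R d]) ((x : 'rV[R]_d) ord0 i)%:E)%E.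

Definition P20 {R : realType} {d : nat} (mu : probability (Rd R d) R) : Prop :=
  (\int[mu]_(x in [set: Rd R d]) (sqnorm (x : 'rV[R]_d))%:E < +oo)%E
  /\ barycenter mu = 0.

Definition Var {R : realType} {d : nat} (mu : probability (Rd R d) R) : \bar R :=
  (\int[mu]_(x in [set: Rd R d]) (sqnorm ((x : 'rV[R]_d) - barycenter mu))%:E)%E.

Definition coupling {R : realType} {d : nat}
  (mu nu : probability (Rd R d) R)
  (pi : probability (Rd R d * Rd R d)%type R) : Prop :=
  (forall A : set (Rd R d), measurable A -> pi (fst @^-1` A) = mu A) /\
  (forall A : set (Rd R d), measurable A -> pi (snd @^-1` A) = nu A).

Definition Kdom {R : realType} {d : nat} (mu nu : probability (Rd R d) R) : Prop :=
  exists pi : probability (Rd R d * Rd R d)%type R,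
    coupling mu nu pi /\
    let f := fun z : (Rd R d * Rd R d)%type =>
      dotv ((z.1 : 'rV[R]_d) - barycenter nu) ((z.2 : 'rV[R]_d) - (z.1 : 'rV[R]_d)) in
    pi.-integrable [set: (Rd R d * Rd R d)%type] (fun z => (f z)%:E) /\
    (\int[pi]_(z in [set: (Rd R d * Rd R d)%type]) (f z)%:E = 0)%E.

(* Linear subspaces of R^d are represented (mxalgebra) as row spaces of
   square matrices E : 'M_d; E is m-dimensional iff \rank E = m. *)
Definition in_subspace {R : realType} {d : nat} (E : 'M[R]_d) (x : 'rV[R]_d) : bool :=
  (x <= E)%MS.

Definition Dm {R : realType} {d : nat} (m : nat) (mu : probability (Rd R d) R) : Prop :=
  P20 mu /\ exists E : 'M[R]_d, \rank E = m /\
    mu [set x : Rd R d | in_subspace E (x : 'rV[R]_d)] = 1%E.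

Definition orth_proj {R : realType} {d : nat} (E : 'M[R]_d) (x : 'rV[R]_d) : 'rV[R]_d :=
  let B := row_base E in x *m B^T *m invmx (B *m B^T) *m B.

Definition is_pushforward {R : realType} {d : nat}
  (mu nu : probability (Rd R d) R) (f : 'rV[R]_d -> 'rV[R]_d) : Prop :=
  forall A : set (Rd R d), measurable A ->
    mu A = nu [set x : Rd R d | f (x : 'rV[R]_d) \in A].

From HB Require Import structures.
From mathcomp Require Import all_boot all_order all_algebra.
From mathcomp Require Import all_classical all_reals all_analysis.
From mathcomp Require Import measurable_realfun ring lra.
Import Order.TTheory GRing.Theory Num.Theory.
Import numFieldNormedType.Exports.
Local Open Scope classical_set_scope.
Local Open Scope ring_scope.
Set Implicit Arguments. Unset Strict Implicit. Unset Printing Implicit Defensive.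

(* Let mu be a maximizer, carried by the subspace E, and pi a coupling of
   mu and nu with E_pi <x, y - x> = 0, i.e. E_pi <x, y> = E_pi |x|^2 = Var mu
   (recall b_nu = 0).  The projection (p_E)_# nu is itself admissible, being
   coupled to nu through y |-> (p_E y, y) with <p_E y, y - p_E y> = 0, so
   maximality gives E_nu |p_E y|^2 <= Var mu.  Since x lies in E pi-a.s.,
   <x, p_E y> = <x, y> pi-a.s., hence
   E_pi |x - p_E y|^2 = E_nu |p_E y|^2 - Var mu <= 0.
   Thus x = p_E y pi-a.s., that is mu = (p_E)_# nu. *)

Section Euclidean.
Variables (R : realType) (d : nat).
Implicit Types (x y z : 'rV[R]_d).

Lemma dotvE x y : dotv x y = (x *m y^T) ord0 ord0.
Proof. by rewrite /dotv !mxE; apply: eq_bigr => i _; rewrite mxE. Qed.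

Lemma dotvC x y : dotv x y = dotv y x.
Proof. by apply: eq_bigr => i _; rewrite mulrC. Qed.

Lemma dotvBr x y z : dotv x (y - z) = dotv x y - dotv x z.
Proof. by rewrite /dotv -sumrB; apply: eq_bigr => i _; rewrite !mxE mulrBr. Qed.

Lemma dotvBl x y z : dotv (y - z) x = dotv y x - dotv z x.
Proof. by rewrite dotvC dotvBr !(dotvC x). Qed.

Lemma dotvNr x y : dotv x (- y) = - dotv x y.
Proof. by rewrite /dotv -sumrN; apply: eq_bigr => i _; rewrite mxE mulrN. Qed.

Lemma sqnorm_ge0 x : 0 <= sqnorm x.
Proof. by apply: sumr_ge0 => i _; rewrite -expr2 sqr_ge0. Qed.

Lemma sqnorm_eq0 x : (sqnorm x == 0) = (x == 0).
Proof.
apply/eqP/eqP => [x0|->]; last by rewrite /sqnorm /dotv big1 // => i _; rewrite mxE mul0r.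
apply/rowP => i; rewrite mxE.
have := @psumr_eq0P R _ predT (fun i => x ord0 i * x ord0 i).
move=> /(_ (fun i _ => ltac:(by rewrite -expr2 sqr_ge0)) x0 i isT)/eqP.
by rewrite mulf_eq0 orbb => /eqP.
Qed.

Lemma sqnormB x y : sqnorm (x - y) = sqnorm x - 2 * dotv x y + sqnorm y.
Proof. by rewrite /sqnorm dotvBr !dotvBl (dotvC y x); lra. Qed.

Lemma sqnormD x y : sqnorm (x + y) = sqnorm x + 2 * dotv x y + sqnorm y.
Proof.
rewrite -[y]opprK sqnormB opprK dotvNr.
have -> : sqnorm (- y) = sqnorm y by rewrite /sqnorm dotvNr dotvC dotvNr opprK.
lra.
Qed.

Lemma ler_norm_dotv x y : `|dotv x y| <= sqnorm x + sqnorm y.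
Proof.
have := sqnorm_ge0 (x - y); have := sqnorm_ge0 (x + y).
rewrite sqnormB sqnormD ler_norml; have := sqnorm_ge0 x; have := sqnorm_ge0 y.
move=> *; apply/andP; split; lra.
Qed.

Lemma ler_norm_coord x i : `|x ord0 i| <= 1 + sqnorm x.
Proof.
have : x ord0 i ^+ 2 <= sqnorm x.
  rewrite /sqnorm /dotv (bigD1 i) //= -expr2 lerDl.
  by apply: sumr_ge0 => j _; rewrite -expr2 sqr_ge0.
rewrite -real_normK ?num_real //; have := normr_ge0 (x ord0 i); nra.
Qed.

End Euclidean.

Section Measurability.
Variable R : realType.

Lemma continuous_mulmx (p m n : nat) (M : 'M[R]_(m, n)) :
  continuous (fun x : 'M[R]_(p, m) => x *m M).
Proof.
move=> /= x s /(nbhs_ballP (x *m M)) [e e0 es].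
pose K := \sum_k \sum_j `|M k j|.
have K0 : 0 <= K by apply: sumr_ge0 => k _; apply: sumr_ge0 => j _.
have dpos : 0 < e / (K + 1) by apply: divr_gt0 => //; rewrite ltr_wpDl.
apply/nbhs_ballP; exists (e / (K + 1)) => //= y [_ xy]; apply: es.
split => // i j; rewrite /ball /= !mxE -sumrB.
have h : `|\sum_k (x i k * M k j - y i k * M k j)| <= e / (K + 1) * K.
  apply: le_trans (ler_norm_sum _ _ _) _.
  rewrite /K mulr_sumr; apply: ler_sum => k _; rewrite -mulrBl normrM.
  apply: le_trans (_ : e / (K + 1) * `|M k j| <= _).
    by apply: ler_wpM2r => //; move: (xy i k); rewrite /ball /= => /ltW.
  apply: ler_wpM2l; first exact: ltW.
  by rewrite (bigD1 j) //= ler_wpDr //; apply: sumr_ge0.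
apply: le_lt_trans h _.
by rewrite -mulrA gtr_pMr // ltr_pdivrMl ?mulr1 ?ltrDl // ltr_wpDl.
Qed.

Variable d : nat.

Lemma continuous_measurable_Rd (g : 'rV[R]_d -> R) :
  continuous g -> measurable_fun [set: Rd R d] (g : Rd R d -> R).
Proof.
move=> /continuousP cg.
apply: (measurability _ (RGenOpens.measurableE R)) => _ [_ [a [b ->]] <-].
by apply: measurableI => //; apply: sub_sigma_algebra; apply: cg; exact: interval_open.
Qed.

Lemma measurable_mulmx (M : 'M[R]_d) :
  measurable_fun [set: Rd R d] (fun x : Rd R d => (x *m M : Rd R d)).
Proof.
have /continuousP cM := @continuous_mulmx 1 d d M.
apply: (measurability _ (erefl (@measurable _ (Rd R d)))) => _ [U oU <-].
by apply: measurableI => //; apply: sub_sigma_algebra; exact: cM.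
Qed.

Definition measurable_coords {d0} {X : measurableType d0} (g : X -> 'rV[R]_d) :=
  forall i, measurable_fun [set: X] (fun x => g x ord0 i).

Lemma measurable_coords_id : measurable_coords (fun x : Rd R d => (x : 'rV[R]_d)).
Proof. by move=> i; apply: continuous_measurable_Rd; exact: coord_continuous. Qed.

Lemma measurable_coords_comp d0 (X : measurableType d0) (f : X -> Rd R d) :
  measurable_fun [set: X] f -> measurable_coords (fun x => (f x : 'rV[R]_d)).
Proof. by move=> mf i; exact: measurableT_comp (measurable_coords_id i) mf. Qed.

Lemma measurable_coordsB d0 (X : measurableType d0) (g h : X -> 'rV[R]_d) :
  measurable_coords g -> measurable_coords h -> measurable_coords (fun x => g x - h x).
Proof.
move=> mg mh i; rewrite (_ : (fun x => _) = (fun x => g x ord0 i) \- (fun x => h x ord0 i)).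
  exact: measurable_funB.
by apply/funext => x; rewrite !mxE.
Qed.

Lemma measurable_coords_mulmx d0 (X : measurableType d0) (g : X -> 'rV[R]_d)
    (M : 'M[R]_d) :
  measurable_coords g -> measurable_coords (fun x => g x *m M).
Proof.
move=> mg i; rewrite (_ : (fun x => _) = (fun x => \sum_k (g x ord0 k * M k i))).
  by apply: measurable_sum => k; exact: measurable_funM.
by apply/funext => x; rewrite !mxE.
Qed.

Lemma measurable_dotv d0 (X : measurableType d0) (g h : X -> 'rV[R]_d) :
  measurable_coords g -> measurable_coords h ->
  measurable_fun [set: X] (fun x => dotv (g x) (h x)).
Proof. by move=> mg mh; apply: measurable_sum => k; exact: measurable_funM. Qed.

Lemma measurable_sqnorm_Rd :
  measurable_fun [set: Rd R d] (fun x : Rd R d => (sqnorm (x : 'rV_d))%:E).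
Proof.
by apply/measurable_EFinP; exact: (measurable_dotv measurable_coords_id measurable_coords_id).
Qed.

Lemma measurable_sqnorm_mulmx (M : 'M[R]_d) :
  measurable_fun [set: Rd R d] (fun x : Rd R d => (sqnorm ((x : 'rV_d) *m M))%:E).
Proof.
have mM := measurable_coords_mulmx M measurable_coords_id.
by apply/measurable_EFinP; exact: (measurable_dotv mM mM).
Qed.

Lemma measurable_subspace (E : 'M[R]_d) :
  measurable [set x : Rd R d | in_subspace E x].
Proof.
have -> : [set x : Rd R d | in_subspace E x] =
    (fun x : Rd R d => sqnorm ((x : 'rV_d) *m cokermx E)) @^-1` [set 0].
  by apply/seteqP; split => x /=; rewrite /in_subspace submxE -sqnorm_eq0 => /eqP.
rewrite -[X in measurable X]setTI.
have mC := measurable_coords_mulmx (cokermx E) measurable_coords_id.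
exact: (measurable_dotv mC mC) measurableT _ (measurable_set1 0).
Qed.

End Measurability.

Section OrthogonalProjection.
Variables (R : realType) (d : nat) (E : 'M[R]_d).
Implicit Types (x y : 'rV[R]_d).

Definition orth_mx : 'M[R]_d :=
  let B := row_base E in B^T *m invmx (B *m B^T) *m B.

Lemma orth_projE x : orth_proj E x = x *m orth_mx.
Proof. by rewrite /orth_proj /orth_mx !mulmxA. Qed.

Lemma row_base_gram_unit : row_base E *m (row_base E)^T \in unitmx.
Proof.
rewrite -row_free_unit; apply: inj_row_free => v vBBt0.
have /eqP : sqnorm (v *m row_base E) = 0.
  by rewrite /sqnorm dotvE trmx_mul mulmxA -(mulmxA v) vBBt0 mul0mx mxE.
rewrite sqnorm_eq0 => /eqP vB0.
by apply: (row_free_inj (row_base_free E)); rewrite vB0 mul0mx.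
Qed.

Lemma tr_orth_mx : orth_mx^T = orth_mx.
Proof.
rewrite /orth_mx; set B := row_base E; clearbody B.
by rewrite !trmx_mul trmxK trmx_inv trmx_mul trmxK !mulmxA.
Qed.

Lemma orth_mx_id x : (x <= E)%MS -> x *m orth_mx = x.
Proof.
rewrite -(eq_row_base E) => /submxP [D ->]; have BBt := row_base_gram_unit.
rewrite /orth_mx; set B := row_base E in BBt *; clearbody B.
by rewrite !mulmxA -(mulmxA D B) -(mulmxA D) (mulmxV BBt) mulmx1.
Qed.

Lemma orth_mx_sub x : (x *m orth_mx <= E)%MS.
Proof.
have BE : (row_base E <= E)%MS by rewrite eq_row_base.
rewrite /orth_mx; set B := row_base E in BE *; clearbody B.
by rewrite !mulmxA (submx_trans (submxMl _ _) BE).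
Qed.

Lemma orth_mx_idem : orth_mx *m orth_mx = orth_mx.
Proof.
have BBt := row_base_gram_unit; rewrite /orth_mx; set B := row_base E in BBt *; clearbody B.
by rewrite !mulmxA -(mulmxA _ B) -(mulmxA _ (B *m B^T)) (mulmxV BBt) mulmx1.
Qed.

Lemma dotv_orth_mxl x y : dotv (x *m orth_mx) y = dotv x (y *m orth_mx).
Proof. by rewrite !dotvE trmx_mul tr_orth_mx !mulmxA. Qed.

Lemma dotv_orth_mx_perp y : dotv (y *m orth_mx) (y - y *m orth_mx) = 0.
Proof. by rewrite dotvBr !dotv_orth_mxl -mulmxA orth_mx_idem subrr. Qed.

Lemma sqnorm_orth_mx_le y : sqnorm (y *m orth_mx) <= sqnorm y.
Proof.
have := sqnormD (y *m orth_mx) (y - y *m orth_mx).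
rewrite dotv_orth_mx_perp mulr0 addr0 addrC subrK => ->.
by rewrite lerDl sqnorm_ge0.
Qed.

End OrthogonalProjection.

Section Integration.
Context {R : realType} {d1 d2 : measure_display}
  {X : measurableType d1} {Y : measurableType d2}.
Local Open Scope ereal_scope.

Section Image.
Variables (mu : {measure set X -> \bar R}) (nu : {measure set Y -> \bar R}).
Variable h : X -> Y.
Hypotheses (mh : measurable_fun [set: X] h)
  (nu_image : forall A, measurable A -> mu (h @^-1` A) = nu A).

Lemma ge0_integral_image (g : Y -> \bar R) :
  measurable_fun [set: Y] g -> (forall y, 0 <= g y) ->
  \int[nu]_y g y = \int[mu]_x g (h x).
Proof.
move=> mg g0; rewrite (eq_measure_integral (pushforward mu h)) => [|A mA _]; last first.
  by rewrite -nu_image.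
by rewrite ge0_integral_pushforward // preimage_setT.
Qed.

End Image.

Variable mu : {measure set X -> \bar R}.

Lemma ge0_integrable_lty (u : X -> R) :
  measurable_fun [set: X] u -> (forall x, (0 <= u x)%R) ->
  \int[mu]_x (u x)%:E < +oo -> mu.-integrable [set: X] (fun x => (u x)%:E).
Proof.
move=> mu0 u0 ufin; apply/integrableP; split; first exact/measurable_EFinP.
by under eq_integral do rewrite gee0_abs ?lee_fin ?u0 //.
Qed.

Section LinearCombination.
Variables (f g : X -> R) (a b : R).
Hypotheses (intf : mu.-integrable [set: X] (fun x => (f x)%:E))
  (intg : mu.-integrable [set: X] (fun x => (g x)%:E)).

Let combE : (fun x => (a * f x + b * g x)%R%:E) =
  (fun x => a%:E * (f x)%:E + b%:E * (g x)%:E).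
Proof. by apply/funext => x; rewrite EFinD !EFinM. Qed.

Lemma integrable_comb : mu.-integrable [set: X] (fun x => (a * f x + b * g x)%R%:E).
Proof. by rewrite combE; apply: integrableD => //; exact: integrableZl. Qed.

Lemma integral_comb : \int[mu]_x (a * f x + b * g x)%R%:E =
  (a * fine (\int[mu]_x (f x)%:E) + b * fine (\int[mu]_x (g x)%:E))%R%:E.
Proof.
rewrite combE integralD //; try exact: integrableZl.
by rewrite !integralZl // EFinD !EFinM !fineK //; exact: integrable_fin_num.
Qed.

End LinearCombination.

Lemma measure_ae_eq_set (A B : set X) :
  measurable A -> measurable B -> {ae mu, forall x, A x <-> B x} -> mu A = mu B.
Proof.
move=> mA mB [N [mN N0 AB]]; rewrite (measureDI mu mA mN) (measureDI mu mB mN).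
have null_in (C : set X) : measurable C -> mu (C `&` N) = 0.
  by move=> mC; apply: (subset_measure0 _ _ _ N0) => //; exact: measurableI.
congr (_ + _); last by apply: (@etrans _ _ 0); [|apply/esym]; exact: null_in.
congr (mu _); apply/seteqP; split => x [Cx Nx].
all: have ABx : A x <-> B x by apply: contrapT => ?; exact/Nx/AB.
all: by split => //; apply/ABx.
Qed.

End Integration.

Definition mulmx_Rd {R : realType} {d : nat} (M : 'M[R]_d) : Rd R d -> Rd R d :=
  fun x => x *m M.

HB.instance Definition _ R d M :=
  isMeasurableFun.Build _ _ _ _ (@mulmx_Rd R d M) (measurable_mulmx M).

Definition graph_mulmx {R : realType} {d : nat} (M : 'M[R]_d) :
  Rd R d -> (Rd R d * Rd R d)%type := fun y => (mulmx_Rd M y, y).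

Lemma measurable_graph_mulmx {R : realType} {d : nat} (M : 'M[R]_d) :
  measurable_fun [set: Rd R d] (graph_mulmx M).
Proof. exact: (measurable_fun_pair (measurable_mulmx M) (@measurable_id _ _ setT)). Qed.

HB.instance Definition _ R d M :=
  isMeasurableFun.Build _ _ _ _ (@graph_mulmx R d M) (measurable_graph_mulmx M).

Section SecondMoment.
Variables (R : realType) (d : nat) (mu : probability (Rd R d) R).
Hypothesis mu20 : P20 mu.
Local Open Scope ereal_scope.

Lemma P20_integrable_sqnorm :
  mu.-integrable [set: Rd R d] (fun x => (sqnorm (x : 'rV_d))%:E).
Proof.
apply: ge0_integrable_lty mu20.1 => [|x]; last exact: sqnorm_ge0.
by apply/measurable_EFinP; exact: measurable_sqnorm_Rd.
Qed.

Lemma P20_integrable_coord i :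
  mu.-integrable [set: Rd R d] (fun x => ((x : 'rV_d) ord0 i)%:E).
Proof.
have int1 : mu.-integrable [set: Rd R d] (fun x => (1%R)%:E).
  exact: finite_measure_integrable_cst.
apply: (le_integrable measurableT _ _ (integrable_comb 1 1 int1 P20_integrable_sqnorm)).
  by apply/measurable_EFinP; exact: (@measurable_coords_id R d i).
move=> x _; rewrite /= lee_fin !mul1r (le_trans (ler_norm_coord _ _)) //.
exact: ler_norm.
Qed.

End SecondMoment.

Section ProjectionCompetitor.
Variables (R : realType) (d : nat) (nu : probability (Rd R d) R).
Hypothesis nu20 : P20 nu.
Local Open Scope ereal_scope.

Lemma integral_coord_barycenter i :
  \int[nu]_x ((x : 'rV_d) ord0 i)%:E = (barycenter nu ord0 i)%:E.
Proof.
rewrite mxE fineK // (integrable_fin_num measurableT) //.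
exact: (P20_integrable_coord nu20 i).
Qed.

Lemma barycenter_mulmx (M : 'M[R]_d) :
  barycenter (distribution nu (mulmx_Rd M)) = barycenter nu *m M.
Proof.
apply/rowP => j; rewrite [LHS]mxE [RHS]mxE.
have intc k : nu.-integrable [set: Rd R d] (fun x => (M k j)%:E * ((x : 'rV_d) ord0 k)%:E).
  exact/integrableZl/(P20_integrable_coord nu20 k).
have coordE : (fun x => ((mulmx_Rd M x : 'rV_d) ord0 j)%:E) =
    (fun x => \sum_k (M k j)%:E * ((x : 'rV_d) ord0 k)%:E).
  by apply/funext => x; rewrite mxE -sumEFin; apply: eq_bigr => k _; rewrite mulrC.
rewrite integral_distribution /=; first last.
- by rewrite /comp /= coordE; exact: integrable_sum.
- by apply/measurable_EFinP; exact: (@measurable_coords_id R d j).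
rewrite coordE integral_sum //.
rewrite (eq_bigr (fun k => (barycenter nu ord0 k * M k j)%:E)) => [|k _].
  by rewrite sumEFin.
rewrite integralZl //; last exact: (P20_integrable_coord nu20 k).
by rewrite integral_coord_barycenter -EFinM mulrC.
Qed.

Variable E : 'M[R]_d.

Definition orth_push := distribution nu (mulmx_Rd (orth_mx E)).

Lemma barycenter_orth_push : barycenter orth_push = 0%R.
Proof. by rewrite barycenter_mulmx nu20.2 mul0mx. Qed.

Lemma integral_sqnorm_orth_push :
  \int[orth_push]_x (sqnorm (x : 'rV_d))%:E =
  \int[nu]_x (sqnorm ((x : 'rV_d) *m orth_mx E))%:E.
Proof.
rewrite ge0_integral_distribution //; first exact: measurable_sqnorm_Rd.
by move=> x; rewrite lee_fin sqnorm_ge0.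
Qed.

Lemma Var_orth_push :
  Var orth_push = \int[nu]_x (sqnorm ((x : 'rV_d) *m orth_mx E))%:E.
Proof.
rewrite /Var barycenter_orth_push -integral_sqnorm_orth_push.
by under eq_integral do rewrite subr0.
Qed.

Lemma Dm_orth_push (m : nat) : \rank E = m -> Dm m orth_push.
Proof.
move=> rkE; split; first split.
- rewrite integral_sqnorm_orth_push; apply: le_lt_trans nu20.1.
  apply: ge0_le_integral => //.
  - by move=> x _; rewrite lee_fin sqnorm_ge0.
  - exact: measurable_sqnorm_mulmx.
  - exact: measurable_sqnorm_Rd.
  - by move=> x _; rewrite lee_fin sqnorm_orth_mx_le.
- exact: barycenter_orth_push.
exists E; split => //.
change (nu (mulmx_Rd (orth_mx E) @^-1` [set x : Rd R d | in_subspace E x]) = 1).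
rewrite (_ : _ @^-1` _ = setT) ?probability_setT //.
by apply/seteqP; split => // x _; exact: orth_mx_sub.
Qed.

Lemma Kdom_orth_push : Kdom orth_push nu.
Proof.
pose g := graph_mulmx (orth_mx E).
exists (distribution nu g); split; first by split.
rewrite nu20.2 /=; set f := fun z : Rd R d * Rd R d => _.
have -> : f = fun z => (dotv (z.1 : 'rV_d) (z.2 - z.1))%:E.
  by apply/funext => z; rewrite /f subr0.
have fg0 y : dotv ((g y).1 : 'rV_d) ((g y).2 - (g y).1) = 0%R.
  exact: dotv_orth_mx_perp.
have mf : measurable_fun [set: Rd R d * Rd R d]
    (fun z => (dotv (z.1 : 'rV_d) (z.2 - z.1))%:E).
  apply/measurable_EFinP; apply: measurable_dotv.
  - exact: measurable_coords_comp measurable_fst.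
  - exact: measurable_coordsB (measurable_coords_comp measurable_snd)
                              (measurable_coords_comp measurable_fst).
have intfg : nu.-integrable [set: Rd R d]
    ((fun z => (dotv (z.1 : 'rV_d) (z.2 - z.1))%:E) \o g).
  apply: (eq_integrable measurableT (cst 0)); last exact: integrable0.
  by move=> y _; rewrite /= fg0.
split.
- apply/integrableP; split => //.
  rewrite ge0_integral_distribution //; last exact: measurableT_comp.
  by under eq_integral do rewrite /= fg0 normr0; rewrite integral0 ltry.
- rewrite integral_distribution //.
  by under eq_integral do rewrite /= fg0; rewrite integral0.
Qed.

End ProjectionCompetitor.

Section KantorovichCoupling.
Variables (R : realType) (d : nat) (mu nu : probability (Rd R d) R).
Variable pi : probability (Rd R d * Rd R d)%type R.
Hypotheses (mu20 : P20 mu) (nu20 : P20 nu) (pi_coupling : coupling mu nu pi).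
Hypothesis pi_martingale :
  let f := fun z : Rd R d * Rd R d =>
    dotv ((z.1 : 'rV_d) - barycenter nu) ((z.2 : 'rV_d) - z.1) in
  pi.-integrable [set: Rd R d * Rd R d] (fun z => (f z)%:E) /\
  (\int[pi]_z (f z)%:E = 0)%E.
Local Open Scope ereal_scope.

Let mfst := measurable_coords_comp (@measurable_fst _ _ (Rd R d) (Rd R d)).
Let msnd := measurable_coords_comp (@measurable_snd _ _ (Rd R d) (Rd R d)).

Lemma integral_coupling_fst (g : Rd R d -> \bar R) :
  measurable_fun [set: Rd R d] g -> (forall x, 0 <= g x) ->
  \int[pi]_z g z.1 = \int[mu]_x g x.
Proof. by move=> mg g0; rewrite (ge0_integral_image measurable_fst pi_coupling.1). Qed.

Lemma integral_coupling_snd (g : Rd R d -> \bar R) :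
  measurable_fun [set: Rd R d] g -> (forall x, 0 <= g x) ->
  \int[pi]_z g z.2 = \int[nu]_x g x.
Proof. by move=> mg g0; rewrite (ge0_integral_image measurable_snd pi_coupling.2). Qed.

Lemma coupling_integrable_sqnorm_fst :
  pi.-integrable [set: Rd R d * Rd R d] (fun z => (sqnorm (z.1 : 'rV_d))%:E).
Proof.
apply: ge0_integrable_lty => [|z|]; first exact: measurable_dotv mfst mfst.
  exact: sqnorm_ge0.
rewrite (integral_coupling_fst (@measurable_sqnorm_Rd R d)) ?mu20.1 //.
by move=> x; rewrite lee_fin sqnorm_ge0.
Qed.

Lemma coupling_integrable_sqnorm_snd :
  pi.-integrable [set: Rd R d * Rd R d] (fun z => (sqnorm (z.2 : 'rV_d))%:E).
Proof.
apply: ge0_integrable_lty => [|z|]; first exact: measurable_dotv msnd msnd.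
  exact: sqnorm_ge0.
rewrite (integral_coupling_snd (@measurable_sqnorm_Rd R d)) ?nu20.1 //.
by move=> x; rewrite lee_fin sqnorm_ge0.
Qed.

Lemma coupling_integrable_dotv :
  pi.-integrable [set: Rd R d * Rd R d] (fun z => (dotv (z.1 : 'rV_d) z.2)%:E).
Proof.
apply: (le_integrable measurableT _ _ (integrable_comb 1 1
  coupling_integrable_sqnorm_fst coupling_integrable_sqnorm_snd)).
  by apply/measurable_EFinP; exact: measurable_dotv mfst msnd.
move=> z _; rewrite /= lee_fin !mul1r (le_trans (ler_norm_dotv _ _)) //.
exact: ler_norm.
Qed.

Lemma coupling_integral_dotv :
  fine (\int[pi]_z (dotv (z.1 : 'rV_d) z.2)%:E) =
  fine (\int[pi]_z (sqnorm (z.1 : 'rV_d))%:E).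
Proof.
have [_ K0] := pi_martingale.
have : \int[pi]_z (1 * dotv (z.1 : 'rV_d) z.2 + -1 * sqnorm (z.1 : 'rV_d))%:E = 0.
  rewrite -K0 nu20.2; apply: eq_integral => z _.
  by rewrite subr0 dotvBr mul1r mulN1r.
rewrite integral_comb; [move=> /(congr1 fine) /=; lra|..].
  exact: coupling_integrable_dotv.
exact: coupling_integrable_sqnorm_fst.
Qed.

Variable E : 'M[R]_d.
Hypothesis mu_E : mu [set x : Rd R d | in_subspace E x] = 1.

Lemma coupling_fst_in_subspace : {ae pi, forall z, in_subspace E z.1}.
Proof.
exists (fst @^-1` ~` [set x : Rd R d | in_subspace E x]); split => //.
- rewrite -[X in measurable X]setTI; apply: measurable_fst => //.
  by apply: measurableC; exact: measurable_subspace.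
- rewrite pi_coupling.1; last by apply: measurableC; exact: measurable_subspace.
  rewrite probability_setC; last exact: measurable_subspace.
  by have -> : mu [set x : Rd R d | in_subspace E x] = 1 := mu_E; rewrite subee.
Qed.

Lemma coupling_integral_sqdist_orth :
  \int[pi]_z (sqnorm ((z.1 : 'rV_d) - z.2 *m orth_mx E))%:E =
  (fine (\int[nu]_y (sqnorm ((y : 'rV_d) *m orth_mx E))%:E) - fine (Var mu))%:E.
Proof.
have mP := measurable_coords_mulmx (orth_mx E) msnd.
have intP : pi.-integrable [set: Rd R d * Rd R d]
    (fun z => (sqnorm ((z.2 : 'rV_d) *m orth_mx E))%:E).
  apply: (le_integrable measurableT _ _ coupling_integrable_sqnorm_snd).
    by apply/measurable_EFinP; exact: (measurable_dotv mP mP).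
  move=> z _; rewrite !gee0_abs ?lee_fin ?sqnorm_ge0 //; exact: sqnorm_orth_mx_le.
have int1 := integrable_comb 1 (-2) coupling_integrable_sqnorm_fst coupling_integrable_dotv.
have int2 := integrable_comb 1 1 int1 intP.
rewrite (ae_eq_integral _ _ measurableT _ (measurable_int _ int2)); first last.
- (* the a.e. filter instance is not inferred on the product space *)
  have ae_pi := ae_filter_ringOfSetsType pi.
  apply: filterS coupling_fst_in_subspace => z zE _; congr EFin.
  by rewrite sqnormB -dotv_orth_mxl orth_mx_id //; lra.
- apply/measurable_EFinP; apply: measurable_dotv; exact: (measurable_coordsB mfst mP).
rewrite (integral_comb _ _ int1 intP) /=.
rewrite (integral_comb _ _ coupling_integrable_sqnorm_fst coupling_integrable_dotv) /=.
rewrite coupling_integral_dotv (integral_coupling_snd (measurable_sqnorm_mulmx _)); last first.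
  by move=> y; rewrite lee_fin sqnorm_ge0.
have -> : Var mu = \int[pi]_z (sqnorm (z.1 : 'rV_d))%:E.
  rewrite /Var mu20.2 (integral_coupling_fst (@measurable_sqnorm_Rd R d)).
    by apply: eq_integral => x _; rewrite subr0.
  by move=> x; rewrite lee_fin sqnorm_ge0.
by congr EFin; lra.
Qed.

Lemma coupling_integral_sqdist_orth_eq0 :
  \int[nu]_y (sqnorm ((y : 'rV_d) *m orth_mx E))%:E <= Var mu ->
  \int[pi]_z (sqnorm ((z.1 : 'rV_d) - z.2 *m orth_mx E))%:E = 0.
Proof.
move=> le_Var; apply/eqP; rewrite eq_le integral_ge0 ?andbT; last first.
  by move=> z _; rewrite lee_fin sqnorm_ge0.
have Var_fin : Var mu \is a fin_num.
  rewrite /Var mu20.2; under eq_integral do rewrite subr0.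
  by apply: integrable_fin_num => //; exact: P20_integrable_sqnorm.
have P_fin : \int[nu]_y (sqnorm ((y : 'rV_d) *m orth_mx E))%:E \is a fin_num.
  rewrite ge0_fin_numE ?(le_lt_trans le_Var) ?ltey_eq ?Var_fin //.
  by apply: integral_ge0 => y _; rewrite lee_fin sqnorm_ge0.
by rewrite coupling_integral_sqdist_orth lee_fin subr_le0 fine_le.
Qed.

End KantorovichCoupling.

Section CouplingGraph.
Variables (R : realType) (d : nat) (mu nu : probability (Rd R d) R).
Variables (pi : probability (Rd R d * Rd R d)%type R) (f : Rd R d -> Rd R d).
Hypotheses (pi_coupling : coupling mu nu pi) (mf : measurable_fun [set: Rd R d] f).
Local Open Scope ereal_scope.

Lemma coupling_ae_graph :
  \int[pi]_z (sqnorm ((z.1 : 'rV_d) - f z.2))%:E = 0 ->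
  {ae pi, forall z, z.1 = f z.2}.
Proof.
have mg : measurable_fun [set: Rd R d * Rd R d]
    (fun z => (sqnorm ((z.1 : 'rV_d) - f z.2))%:E).
  have mdiff : measurable_coords (fun z : Rd R d * Rd R d => (z.1 : 'rV_d) - f z.2)%R.
    apply: measurable_coordsB; apply: measurable_coords_comp; first exact: measurable_fst.
    exact: measurableT_comp mf measurable_snd.
  by apply/measurable_EFinP; exact: (measurable_dotv mdiff mdiff).
move=> sq0; have /(ae_eq_integral_abs pi measurableT mg) :
    \int[pi]_z `|(sqnorm ((z.1 : 'rV_d) - f z.2))%:E| = 0.
  by rewrite -sq0; apply: eq_integral => z _; rewrite gee0_abs // lee_fin sqnorm_ge0.
have ae_pi := ae_filter_ringOfSetsType pi.
by apply: filterS => z /(_ I) [/eqP]; rewrite sqnorm_eq0 subr_eq0 => /eqP.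
Qed.

Lemma coupling_ae_graph_pushforward :
  {ae pi, forall z, z.1 = f z.2} -> is_pushforward mu nu f.
Proof.
move=> graph_f A mA.
have mfA : measurable [set x : Rd R d | f x \in A].
  rewrite (_ : [set x | _] = f @^-1` A); last by apply/seteqP; split => x /=; rewrite inE.
  by rewrite -[X in measurable X]setTI; exact: mf.
rewrite -pi_coupling.1 // -pi_coupling.2 //.
apply: measure_ae_eq_set.
- by rewrite -[X in measurable X]setTI; exact: measurable_fst.
- by rewrite -[X in measurable X]setTI; exact: measurable_snd.
have ae_pi := ae_filter_ringOfSetsType pi.
by apply: filterS graph_f => z /= ->; rewrite inE.
Qed.

End CouplingGraph.

Theorem mainTheorem16 (R : realType) (d m : nat)
  (nu : probability (Rd R d) R) (hnu : P20 nu)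
  (hm1 : (1 <= m)%N) (hmd : (m <= d)%N)
  (mu : probability (Rd R d) R)
  (hmuD : Dm m mu) (hmuK : Kdom mu nu)
  (hmax : forall mu' : probability (Rd R d) R,
      Dm m mu' -> Kdom mu' nu -> (Var mu' <= Var mu)%E) :
  exists E : 'M[R]_d, \rank E = m /\ is_pushforward mu nu (orth_proj E).
Proof.
case: hmuD => mu20 [E [rkE mu_E]]; exists E; split => //.
case: hmuK => pi [pi_coupling pi_martingale].
have := hmax _ (Dm_orth_push hnu rkE) (Kdom_orth_push hnu E).
rewrite (Var_orth_push hnu) => le_Var.
have sqdist0 :=
  coupling_integral_sqdist_orth_eq0 mu20 hnu pi_coupling pi_martingale mu_E le_Var.
have -> : orth_proj E = mulmx_Rd (orth_mx E) by apply/funext => x; rewrite orth_projE.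
apply: coupling_ae_graph_pushforward pi_coupling (measurable_mulmx _) _.
exact: coupling_ae_graph (measurable_mulmx _) sqdist0.
Qed.
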